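(* Assume (A1), (A2), (A3) (see context) and let the sequences be generated by the inexact DPMM algorithm. Then for every $k\ge0$, $$Q\xi^k+V^k\in(Q+\Phi)(\widehat\xi^k)\quad(\text{i.e. }\widehat\xi^k=(Q+\Phi)^{-1}(Q\xi^k+V^k)),\qquad \xi^{k+1}=\xi^k-M(\xi^k-\widehat\xi^k),$$ where $V^k=\mathrm{col}(v_1^k,\dots,v_m^k,0_{m(p+q)},0_{r(p+q)})$ satisfies $\|V^k\|\le\varepsilon^k:=\big(\sum_{i=1}^m(\varepsilon_i^k)^2\big)^{1/2}$.
   Context: Problem. Let $m\ge2$, $n_1,\dots,n_m\ge1$, $p,q\ge0$ integers, $n=\sum_in_i$, $\mathcal V=\{1,\dots,m\}$. For $i\in\mathcal V$ let $f_i:\mathbb R^{n_i}\to\mathbb R$, $A_i\in\mathbb R^{p\times n_i}$, $b_i\in\mathbb R^p$, $g_i:\mathbb R^{n_i}\to\mathbb R^q$, $\Omega_i\subseteq\mathbb R^{n_i}$, $G_i(\mathrm x_i)=\mathrm{col}(A_i\mathrm x_i-b_i,g_i(\mathrm x_i))$, $\mathcal K=\{0_p\}\times\mathbb R^q_-$, $\mathcal K^\circ=\mathbb R^p\times\mathbb R^q_+$. Problem (P): minimize $\sum_if_i(\mathrm x_i)$ s.t. $\sum_iG_i(\mathrm x_i)\in\mathcal K$, $\mathrm x_i\in\Omega_i$. $\ell_i(\mathrm x_i,\mathrm y)=f_i(\mathrm x_i)+\mathrm y^\top G_i(\mathrm x_i)+\delta_{\Omega_i}(\mathrm x_i)-\delta_{\mathcal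 K^\circ}(\mathrm y)$ ($\delta_S$ indicator). Assumptions. (A1) $\mathcal G=(\mathcal V,\mathcal E)$ connected undirected; $L\in\mathbb R^{m\times m}$ symmetric, compatible with $\mathcal G$ ($L_{ij}=0$ for $i\ne j$, $(i,j)\notin\mathcal E$; $\mathrm{null}(L)=\mathrm{span}\{\mathbf 1_m\}$), $L=U^\top U$, $U\in\mathbb R^{r\times m}$ full row rank, $U\mathbf 1_m=0$. (A2) $f_i$ and components of $g_i$ proper closed convex, $\Omega_i$ nonempty closed convex, (P) has an optimal solution. (A3) there is $\bar{\mathrm x}$ with $\bar{\mathrm x}_i\in\mathrm{int}\,\Omega_i$, $\sum_i(A_i\bar{\mathrm x}_i-b_i)=0$, $\sum_ig_i(\bar{\mathrm x}_i)<0$. Operator. $\mathbf L=L\otimes I_{p+q}$, $\mathbf U=U\otimes I_{p+q}$; $\mathcal L(\mathrm x,\mathrm Y)=\sum_i\ell_i(\mathrm x_i,\mathrm y_i)$; $\partial_{\mathrm Y}\mathcal L:=-\partial_{\mathrm Y}[-\mathcal L]$; $\Phi(\mathrm x,\mathrm Y,\mathrm Z)=\partial_{\mathrm x}\mathcal L(\mathrm x,\mathrm Y)\times(-\partial_{\mathrm Y}\mathcal L(\mathrm x,\mathrm Y)+\mathbf U^\top\mathrm Z)\times\{-\mathbf U\mathrm Y\}$, $\mathrm Z\in\mathbb R^{r(p+q)}$. Matrices. Parameters $\theta_i,\alpha_i,\gamma_i>0$, $\beta>0$; $\Theta=\mathrm{diag}(\theta_iI_{n_i})$, $\Upsilon=\mathrm{diag}(\alpha_iI_{n_i})$,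 $\Gamma=\mathrm{diag}(\gamma_iI_{p+q})$; $Q=\begin{pmatrix}\Upsilon^{-1}&0&0\\0&\Gamma^{-1}&-\mathbf U^\top\\0&0&\frac1\beta I\end{pmatrix}$, $M=\begin{pmatrix}\Theta&0&0\\0&I&-\Gamma\mathbf U^\top\\0&0&I\end{pmatrix}$. Algorithm (inexact DPMM). $\mathcal P_{\mathcal K^\circ}(u_1,u_2)=(u_1,\max(u_2,0))$. Initialize $\mathrm x_i^0\in\Omega_i$, $\mathrm y_i^0\in\mathcal K^\circ$, $\lambda_i^0=0$. At iteration $k$, agent $i$ chooses $\varepsilon_i^k\ge0$, sets $\phi_i^k(\mathrm x_i,\mathrm y_i)=f_i(\mathrm x_i)+\frac1{2\gamma_i}(\|\mathcal P_{\mathcal K^\circ}(\mathrm y_i+\gamma_iG_i(\mathrm x_i))\|^2-\|\mathrm y_i\|^2)+\frac1{2\alpha_i}\|\mathrm x_i-\mathrm x_i^k\|^2+\delta_{\Omega_i}(\mathrm x_i)$, computes $\widehat{\mathrm x}_i^k$ and $v_i^k\in\partial_{\mathrm x_i}\phi_i^k(\widehat{\mathrm x}_i^k,\mathrm y_i^k-\gamma_i\lambda_i^k)$ with $\|v_i^k\|\le\varepsilon_i^k$, then $\widehat{\mathrm y}_i^k=\mathcal P_{\mathcal K^\circ}(\mathrm y_i^k-\gamma_i\lambda_i^k+\gamma_iG_i(\widehat{\mathrm x}_i^k))$, $\mathrm x_i^{k+1}=(1-\theta_i)\mathrm x_i^k+\theta_i\widehat{\mathrm x}_i^k$, $\lambda_i^{k+1}=\lambda_i^k+\beta\sum_jL_{ij}\widehat{\mathrm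 y}_j^k$, $\mathrm y_i^{k+1}=\widehat{\mathrm y}_i^k+\gamma_i(\lambda_i^k-\lambda_i^{k+1})$. Stack $\mathrm x^k,\mathrm Y^k,\Lambda^k=\mathrm{col}(\lambda_i^k),\widehat{\mathrm x}^k,\widehat{\mathrm Y}^k$; $\widehat\Lambda^k:=\Lambda^{k+1}$; $\mathrm Z^k,\widehat{\mathrm Z}^k$ are the vectors with $\Lambda^k=\mathbf U^\top\mathrm Z^k$, $\widehat\Lambda^k=\mathbf U^\top\widehat{\mathrm Z}^k$; $\xi^k=\mathrm{col}(\mathrm x^k,\mathrm Y^k,\mathrm Z^k)$, $\widehat\xi^k=\mathrm{col}(\widehat{\mathrm x}^k,\widehat{\mathrm Y}^k,\widehat{\mathrm Z}^k)$. *)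

From HB Require Import structures.
From mathcomp Require Import all_boot all_order all_algebra.
From mathcomp Require Import all_classical all_reals all_analysis.
Set Implicit Arguments. Unset Strict Implicit. Unset Printing Implicit Defensive.
Import Order.TTheory GRing.Theory Num.Theory.
Import numFieldNormedType.Exports.
Local Open Scope classical_set_scope.
Local Open Scope ring_scope.

Section Defs.
Variable R : realType.

Definition dotv d (u v : 'cV[R]_d) : R := \sum_(j < d) u j 0 * v j 0.
Definition vnorm d (u : 'cV[R]_d) : R := Num.sqrt (dotv u u).

Definition convex_fun d (F : 'cV[R]_d -> R) : Prop :=
  forall x y t, 0 <= t <= 1 -> F (t *: x + (1 - t) *: y) <= t * F x + (1 - t) * F y.
Definition closed_fun d (F : 'cV[R]_d -> R) : Prop :=
  closed [set xt : 'cV[R]_d * R | F xt.1 <= xt.2].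

Definition indic T (S : set T) (x : T) : \bar R :=
  if `[< S x >] then 0%E else +oo%E.

Definition coneK p q : set 'cV[R]_(p + q) :=
  [set y | usubmx y = 0 /\ forall j, dsubmx y j 0 <= 0].
Definition coneKo p q : set 'cV[R]_(p + q) :=
  [set y | forall j, 0 <= dsubmx y j 0].
Definition projKo p q (u : 'cV[R]_(p + q)) : 'cV[R]_(p + q) :=
  col_mx (usubmx u) (map_mx (fun a => Num.max a 0) (dsubmx u)).

Definition Gfun p q d (A : 'M[R]_(p, d)) (b : 'cV[R]_p) (g : 'cV[R]_d -> 'cV[R]_q)
  (x : 'cV[R]_d) : 'cV[R]_(p + q) := col_mx (A *m x - b) (g x).

Definition subdiff d (F : 'cV[R]_d -> \bar R) (x : 'cV[R]_d) : set 'cV[R]_d :=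
  [set v | F x \is a fin_num /\
           forall z, (F x + (dotv v (z - x))%:E <= F z)%E].

(** stacked vectors col(w_1,...,w_k) with w_i in R^(d i), with the
    Euclidean inner product sum_i <w_i, w'_i> *)
Definition stk (I : finType) (d : I -> nat) := forall i : I, 'cV[R]_(d i).
Definition stk_dot (I : finType) (d : I -> nat) (u v : stk d) : R :=
  \sum_i dotv (u i) (v i).
Definition stk_sub (I : finType) (d : I -> nat) (u v : stk d) : stk d :=
  fun i => u i - v i.
Definition subdiffS (I : finType) (d : I -> nat) (F : stk d -> \bar R) (x : stk d)
  : set (stk d) :=
  [set v | F x \is a fin_num /\
           forall z, (F x + (stk_dot v (stk_sub z x))%:E <= F z)%E].

(** (U ⊗ I) Y  and  (U ⊗ I)^T Z *)
Definition Ukr m r s (U : 'M[R]_(r, m)) (Y : 'I_m -> 'cV[R]_s) : 'I_r -> 'cV[R]_s :=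
  fun j => \sum_(i < m) U j i *: Y i.
Definition UkrT m r s (U : 'M[R]_(r, m)) (Z : 'I_r -> 'cV[R]_s) : 'I_m -> 'cV[R]_s :=
  fun i => \sum_(j < r) U j i *: Z j.

Record pt m (n : 'I_m -> nat) (s r : nat) := Pt {
  ptx : forall i : 'I_m, 'cV[R]_(n i);
  pty : 'I_m -> 'cV[R]_s;
  ptz : 'I_r -> 'cV[R]_s }.

Definition pt_add m n s r (a b : @pt m n s r) : pt n s r :=
  Pt (fun i => ptx a i + ptx b i) (fun i => pty a i + pty b i) (fun j => ptz a j + ptz b j).
Definition pt_sub m n s r (a b : @pt m n s r) : pt n s r :=
  Pt (fun i => ptx a i - ptx b i) (fun i => pty a i - pty b i) (fun j => ptz a j - ptz b j).
Definition pt_norm m n s r (a : @pt m n s r) : R :=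
  Num.sqrt (\sum_i vnorm (ptx a i) ^+ 2 + \sum_i vnorm (pty a i) ^+ 2
            + \sum_j vnorm (ptz a j) ^+ 2).

Definition ell p q d (f : 'cV[R]_d -> R) (A : 'M[R]_(p, d)) (b : 'cV[R]_p)
  (g : 'cV[R]_d -> 'cV[R]_q) (Om : set 'cV[R]_d) (x : 'cV[R]_d) (y : 'cV[R]_(p + q))
  : \bar R :=
  ((f x + dotv y (Gfun A b g x))%:E + indic Om x - indic (@coneKo p q) y)%E.

Definition Lag m (n : 'I_m -> nat) p q (f : forall i, 'cV[R]_(n i) -> R)
  (A : forall i, 'M[R]_(p, n i)) (b : 'I_m -> 'cV[R]_p)
  (g : forall i, 'cV[R]_(n i) -> 'cV[R]_q) (Om : forall i, set 'cV[R]_(n i))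
  (x : forall i, 'cV[R]_(n i)) (Y : 'I_m -> 'cV[R]_(p + q)) : \bar R :=
  (\sum_(i < m) ell (f i) (A i) (b i) (g i) (Om i) (x i) (Y i))%E.

(** Phi(x,Y,Z) = d_x L(x,Y) x (-d_Y L(x,Y) + U^T Z) x {-U Y},
    with d_Y L := - d_Y[-L], so -d_Y L = d_Y[-L]. *)
Definition Phi m (n : 'I_m -> nat) p q r (f : forall i, 'cV[R]_(n i) -> R)
  (A : forall i, 'M[R]_(p, n i)) (b : 'I_m -> 'cV[R]_p)
  (g : forall i, 'cV[R]_(n i) -> 'cV[R]_q) (Om : forall i, set 'cV[R]_(n i))
  (U : 'M[R]_(r, m)) (xi : pt n (p + q) r) : set (pt n (p + q) r) :=
  [set w | subdiffS (fun x' => Lag f A b g Om x' (pty xi)) (ptx xi) (ptx w)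
        /\ (exists2 u, subdiffS (d := fun _ : 'I_m => (p + q)%N)
                             (fun Y' => - Lag f A b g Om (ptx xi) Y')%E (pty xi) u
                     & pty w = fun i => u i + UkrT U (ptz xi) i)
        /\ ptz w = fun j => - Ukr U (pty xi) j].

Definition Qop m (n : 'I_m -> nat) s r (alpha gamma : 'I_m -> R) (beta : R)
  (U : 'M[R]_(r, m)) (xi : pt n s r) : pt n s r :=
  Pt (fun i => (alpha i)^-1 *: ptx xi i)
     (fun i => (gamma i)^-1 *: pty xi i - UkrT U (ptz xi) i)
     (fun j => beta^-1 *: ptz xi j).

Definition Mop m (n : 'I_m -> nat) s r (theta gamma : 'I_m -> R)
  (U : 'M[R]_(r, m)) (xi : pt n s r) : pt n s r :=
  Pt (fun i => theta i *: ptx xi i)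
     (fun i => pty xi i - gamma i *: UkrT U (ptz xi) i)
     (fun j => ptz xi j).

Definition QPhi m (n : 'I_m -> nat) p q r f A b g Om (alpha gamma : 'I_m -> R) (beta : R)
  (U : 'M[R]_(r, m)) (xi : pt n (p + q) r) : set (pt n (p + q) r) :=
  [set pt_add (Qop alpha gamma beta U xi) w | w in @Phi m n p q r f A b g Om U xi].

(** phi_i^k(., y): the function minimised (inexactly) by agent i *)
Definition phik p q d (f : 'cV[R]_d -> R) (A : 'M[R]_(p, d)) (b : 'cV[R]_p)
  (g : 'cV[R]_d -> 'cV[R]_q) (Om : set 'cV[R]_d) (gam alp : R) (xk : 'cV[R]_d)
  (y : 'cV[R]_(p + q)) (x : 'cV[R]_d) : \bar R :=
  ((f x + (2 * gam)^-1 * (vnorm (projKo (y + gam *: Gfun A b g x)) ^+ 2 - vnorm y ^+ 2)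
     + (2 * alp)^-1 * vnorm (x - xk) ^+ 2)%:E + indic Om x)%E.

End Defs.

(* Writing y~ = y_i^k - gamma_i lambda_i^k, the function phi_i^k is f_i plus a proximal
   quadratic plus (1/2gamma_i) |P(y~ + gamma_i G_i)|^2, P the projection onto K°.  Since G_i is
   convex for the order induced by K and |P(.)|^2 is monotone for that order, the directional
   derivative of the last term at x^ along z - x^ is at most <y^_i, G_i z - G_i x^>, up to a
   quadratic remainder.  Letting the step tend to 0 in the inexact optimality condition
   v_i in d phi_i^k(x^_i) yields the subgradient inequality of l_i(., y^_i) with subgradient
   v_i + (x_i^k - x^_i)/alpha_i.  In y, y^_i is a projection onto K°, and its normal-cone
   inequality is the supergradient inequality of l_i(x^_i, .).  Finally
   lambda^{k+1} = lambda^k + beta L Y^ with L = U^T U and U of full row rank (so that U^T is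
   injective) gives Z^ = Z^k + beta U Y^ and Z^{k+1} = Z^; the rest is linear algebra. *)

From Pilot Require Import Defs.
From HB Require Import structures.
From mathcomp Require Import all_boot all_order all_algebra.
From mathcomp Require Import all_classical all_reals all_analysis.
From mathcomp Require Import ring lra.
Set Implicit Arguments. Unset Strict Implicit. Unset Printing Implicit Defensive.
Import Order.TTheory GRing.Theory Num.Theory.
Import numFieldNormedType.Exports.
Local Open Scope classical_set_scope.
Local Open Scope ring_scope.

Section VectorFacts.
Variable R : realType.

Lemma dotvC d (u w : 'cV[R]_d) : dotv u w = dotv w u.
Proof. by apply: eq_bigr => j _; rewrite mulrC. Qed.

Lemma dotvDl d (u u' w : 'cV[R]_d) : dotv (u + u') w = dotv u w + dotv u' w.
Proof. by rewrite /dotv -big_split; apply: eq_bigr => j _; rewrite mxE mulrDl. Qed.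

Lemma dotvZl d c (u w : 'cV[R]_d) : dotv (c *: u) w = c * dotv u w.
Proof. by rewrite /dotv mulr_sumr; apply: eq_bigr => j _; rewrite mxE mulrA. Qed.

Lemma dotvNl d (u w : 'cV[R]_d) : dotv (- u) w = - dotv u w.
Proof. by rewrite -scaleN1r dotvZl mulN1r. Qed.

Lemma dotvBl d (u u' w : 'cV[R]_d) : dotv (u - u') w = dotv u w - dotv u' w.
Proof. by rewrite dotvDl dotvNl. Qed.

Lemma dotvDr d (u w w' : 'cV[R]_d) : dotv u (w + w') = dotv u w + dotv u w'.
Proof. by rewrite dotvC dotvDl !(dotvC u). Qed.

Lemma dotvZr d c (u w : 'cV[R]_d) : dotv u (c *: w) = c * dotv u w.
Proof. by rewrite dotvC dotvZl dotvC. Qed.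

Lemma dotvBr d (u w w' : 'cV[R]_d) : dotv u (w - w') = dotv u w - dotv u w'.
Proof. by rewrite dotvC dotvBl !(dotvC u). Qed.

Lemma dotv_ge0 d (u : 'cV[R]_d) : 0 <= dotv u u.
Proof. by apply: sumr_ge0 => j _; rewrite -expr2 sqr_ge0. Qed.

Lemma vnorm_sqr d (u : 'cV[R]_d) : vnorm u ^+ 2 = dotv u u.
Proof. by rewrite sqr_sqrtr ?dotv_ge0. Qed.

Lemma vnorm_ge0 d (u : 'cV[R]_d) : 0 <= vnorm u.
Proof. exact: sqrtr_ge0. Qed.

Lemma vnorm0 d : vnorm (0 : 'cV[R]_d) = 0.
Proof. by rewrite /vnorm /dotv big1 ?sqrtr0 // => j _; rewrite mxE mul0r. Qed.

Lemma vnorm_sqrD d (u w : 'cV[R]_d) :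
  vnorm (u + w) ^+ 2 = vnorm u ^+ 2 + 2 * dotv u w + vnorm w ^+ 2.
Proof. rewrite !vnorm_sqr !dotvDl !dotvDr (dotvC w u); ring. Qed.

Lemma vnorm_sqrZ d c (u : 'cV[R]_d) : vnorm (c *: u) ^+ 2 = c ^+ 2 * vnorm u ^+ 2.
Proof. by rewrite !vnorm_sqr dotvZl dotvZr mulrA -expr2. Qed.

Lemma vnorm_sqr_le d (u w : 'cV[R]_d) :
  (forall j, u j 0 ^+ 2 <= w j 0 ^+ 2) -> vnorm u ^+ 2 <= vnorm w ^+ 2.
Proof. by move=> uw; rewrite !vnorm_sqr; apply: ler_sum => j _; rewrite -!expr2. Qed.

End VectorFacts.

Section ProjectionOntoPolarCone.
Variables (R : realType) (p q : nat).
Implicit Types u w s Y : 'cV[R]_(p + q).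

Lemma projKo_lshift u k : projKo u (lshift q k) 0 = u (lshift q k) 0.
Proof. by rewrite /projKo col_mxEu mxE. Qed.

Lemma projKo_rshift u k : projKo u (rshift p k) 0 = Num.max (u (rshift p k) 0) 0.
Proof. by rewrite /projKo col_mxEd !mxE. Qed.

Lemma projKo_coneKo u : coneKo (projKo u).
Proof. by move=> k; rewrite mxE projKo_rshift le_max lexx orbT. Qed.

Lemma projKo_normal w Y : coneKo Y -> dotv (w - projKo w) (Y - projKo w) <= 0.
Proof.
move=> KoY; apply: sumr_le0 => j _; rewrite [(w - _) _ _]mxE [(Y - _) _ _]mxE [(- projKo w) _ _]mxE.
case: (split_ordP j) => k ->; first by rewrite projKo_lshift subrr mul0r.
have := KoY k; rewrite mxE projKo_rshift.
by have [w_le0|w_gt0] := leP (w (rshift p k) 0) 0; nra.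
Qed.

Lemma projKo_sqr_mono u w : coneK (u - w) -> vnorm (projKo u) ^+ 2 <= vnorm (projKo w) ^+ 2.
Proof.
move=> [uw_eq uw_le]; apply: vnorm_sqr_le => j.
case: (split_ordP j) => k ->; rewrite ?projKo_lshift ?projKo_rshift.
  by move/matrixP/(_ k 0): uw_eq; rewrite !mxE => /eqP; rewrite subr_eq0 => /eqP->.
have := uw_le k; rewrite !mxE.
have [|] := leP (u (rshift p k) 0) 0; have [|] := leP (w (rshift p k) 0) 0; nra.
Qed.

Lemma projKo_sqr_addr w s : vnorm (projKo (w + s)) ^+ 2 <= vnorm (projKo w + s) ^+ 2.
Proof.
apply: vnorm_sqr_le => j; rewrite [(projKo w + s) j 0]mxE.
case: (split_ordP j) => k ->; rewrite ?projKo_lshift ?projKo_rshift ?mxE //.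
have [|] := leP (w (rshift p k) 0 + s (rshift p k) 0) 0;
  have [|] := leP (w (rshift p k) 0) 0; nra.
Qed.

End ProjectionOntoPolarCone.

Section Convexity.
Variable R : realType.

Lemma ler_of_first_order (a b C : R) :
  (forall t, 0 < t -> t <= 1 -> t * a <= t * b + t ^+ 2 * C) -> a <= b.
Proof.
move=> small; apply/ler_addgt0Pr => e e_gt0.
have eC_gt0 : 0 < e + `|C| by rewrite ltr_wpDr.
pose t := e / (e + `|C|).
have t_gt0 : 0 < t by rewrite divr_gt0.
have t_le1 : t <= 1 by rewrite ler_pdivrMr // mul1r lerDl.
have tC_le : t * C <= e.
  apply: le_trans (ler_wpM2l (ltW t_gt0) (ler_norm C)) _.
  by rewrite /t mulrAC ler_pdivrMr // ler_pM2l // lerDr ltW.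
have := small t t_gt0 t_le1; rewrite expr2 -mulrA -mulrDr ler_pM2l // => /le_trans; apply.
by rewrite lerD2l.
Qed.

Lemma convex_set_comb d (Om : set 'cV[R]_d) (a b : 'cV[R]_d) (t : R) :
  convex_set Om -> 0 <= t <= 1 -> Om a -> Om b -> Om (t *: a + (1 - t) *: b).
Proof.
move=> Om_convex /andP[t_ge0 t_le1] Oma Omb.
have t01 : Itv.spec (@Itv.num_sem R) (Itv.Real `[0%Z, 1%Z]) t.
  by rewrite /= /Itv.num_sem /= num_real in_itv /= t_ge0 t_le1.
have := Om_convex a b (@Itv.Def _ _ _ t t01).
by rewrite !inE; apply.
Qed.

Lemma coneKZ p q c (u : 'cV[R]_(p + q)) : 0 <= c -> coneK u -> coneK (c *: u).
Proof.
move=> c_ge0 [u_eq u_le]; split => [|j].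
  by apply/matrixP => k l; move/matrixP/(_ k l): u_eq; rewrite !mxE => ->; rewrite mulr0.
by have := u_le j; rewrite !mxE; apply: mulr_ge0_le0.
Qed.

Lemma Gfun_convex p q d (A : 'M[R]_(p, d)) b (g : 'cV[R]_d -> 'cV[R]_q) x z t :
  (forall j, convex_fun (fun z => g z j 0)) -> 0 <= t <= 1 ->
  coneK (Gfun A b g (t *: z + (1 - t) *: x) - (t *: Gfun A b g z + (1 - t) *: Gfun A b g x)).
Proof.
move=> g_convex t01.
rewrite /Gfun !(scale_col_mx, add_col_mx, opp_col_mx); split => [|j].
  rewrite col_mxKu mulmxDr -!scalemxAr.
  by apply/matrixP => k l; rewrite !mxE; ring.
by rewrite col_mxKd !mxE subr_le0; apply: g_convex.
Qed.

End Convexity.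

Section LinearizedProxStep.
Variables (R : realType) (p q d : nat).
Variables (f : 'cV[R]_d -> R) (A : 'M[R]_(p, d)) (b : 'cV[R]_p).
Variables (g : 'cV[R]_d -> 'cV[R]_q) (Om : set 'cV[R]_d).
Hypothesis g_convex : forall j, convex_fun (fun z => g z j 0).
Local Notation G := (Gfun A b g).

Lemma projKo_sqr_segment (gam t : R) yt x z : 0 <= gam -> 0 <= t <= 1 ->
  vnorm (projKo (yt + gam *: G (t *: z + (1 - t) *: x))) ^+ 2 <=
    vnorm (projKo (yt + gam *: G x)) ^+ 2
    + 2 * (gam * t) * dotv (projKo (yt + gam *: G x)) (G z - G x)
    + (gam * t) ^+ 2 * vnorm (G z - G x) ^+ 2.
Proof.
move=> gam_ge0 t01.
apply: le_trans (projKo_sqr_mono (w := yt + gam *: G x + (gam * t) *: (G z - G x)) _) _.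
  have := coneKZ gam_ge0 (Gfun_convex A b x z g_convex t01).
  move: (G _) (G z) (G x) => Gt Gz Gx.
  suff -> : yt + gam *: Gt - (yt + gam *: Gx + (gam * t) *: (Gz - Gx)) =
            gam *: (Gt - (t *: Gz + (1 - t) *: Gx)) by [].
  by apply/matrixP => i j; rewrite !mxE; ring.
by apply: le_trans (projKo_sqr_addr _ _) _; rewrite vnorm_sqrD vnorm_sqrZ dotvZr mulrA.
Qed.

Lemma subdiff_phik_dom gam alp xk yt xh v :
  subdiff (phik f A b g Om gam alp xk yt) xh v -> Om xh.
Proof. by move=> [+ _]; rewrite /phik /Defs.indic; case: asboolP. Qed.

Lemma phikE gam alp xk yt z : Om z ->
  phik f A b g Om gam alp xk yt z =
  (f z + (2 * gam)^-1 * (vnorm (projKo (yt + gam *: G z)) ^+ 2 - vnorm yt ^+ 2)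
       + (2 * alp)^-1 * vnorm (z - xk) ^+ 2)%:E.
Proof. by move=> Omz; rewrite /phik /Defs.indic asboolT // adde0. Qed.

Hypotheses (f_convex : convex_fun f) (Om_convex : convex_set Om).

Lemma subdiff_phik_lagrangian (gam alp : R) xk yt xh v z :
  0 < gam -> 0 < alp -> subdiff (phik f A b g Om gam alp xk yt) xh v -> Om z ->
  f xh + dotv (projKo (yt + gam *: G xh)) (G xh) + dotv (v + alp^-1 *: (xk - xh)) (z - xh)
    <= f z + dotv (projKo (yt + gam *: G xh)) (G z).
Proof.
move=> gam_gt0 alp_gt0 sub_v Omz; have Omxh := subdiff_phik_dom sub_v.
set yh := projKo _.
rewrite dotvDl dotvZl -[xk - xh]opprB dotvNl mulrN.
set a := dotv v (z - xh) - alp^-1 * dotv (xh - xk) (z - xh).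
set P := dotv yh (G z - G xh); set DD := vnorm (G z - G xh) ^+ 2.
suff : a <= f z - f xh + P by rewrite /P dotvBr; lra.
apply: (ler_of_first_order (C := gam / 2 * DD + (2 * alp)^-1 * vnorm (z - xh) ^+ 2)).
move=> t t_gt0 t_le1; have t01 : 0 <= t <= 1 by rewrite ltW.
pose zt := t *: z + (1 - t) *: xh.
have Omzt : Om zt := convex_set_comb Om_convex t01 Omz Omxh.
have := sub_v.2 zt; rewrite !phikE // -EFinD lee_fin.
have -> : zt - xh = t *: (z - xh) by apply/matrixP => i j; rewrite !mxE; ring.
have -> : zt - xk = (xh - xk) + t *: (z - xh) by apply/matrixP => i j; rewrite !mxE; ring.
rewrite [vnorm (_ + t *: _) ^+ 2]vnorm_sqrD vnorm_sqrZ !dotvZr => phi_ineq.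
have f_zt := f_convex z xh t01.
have c1_ge0 : 0 <= (2 * gam)^-1 by rewrite invr_ge0 mulr_ge0 // ltW.
have := ler_wpM2l c1_ge0 (projKo_sqr_segment yt xh z (ltW gam_gt0) t01).
have gam_neq0 : gam != 0 by rewrite gt_eqF.
have alp_neq0 : alp != 0 by rewrite gt_eqF.
have e1 : (2 * gam)^-1 * (2 * (gam * t) * P) = t * P by field.
have e2 : (2 * gam)^-1 * ((gam * t) ^+ 2 * DD) = t ^+ 2 * (gam / 2 * DD) by field.
have e3 : forall w, (2 * alp)^-1 * (2 * (t * w)) = t * (alp^-1 * w) by move=> w; field.
rewrite -/yh -/P -/DD !mulrDr e1 e2 => N_zt.
rewrite !mulrDr e3 in phi_ineq.
rewrite /a; lra.
Qed.

End LinearizedProxStep.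

Lemma projKo_supergradient (R : realType) p q (yt Gv Y : 'cV[R]_(p + q)) (gam : R) :
  0 < gam -> coneKo Y ->
  dotv Y Gv + dotv (gam^-1 *: (yt - projKo (yt + gam *: Gv))) (Y - projKo (yt + gam *: Gv))
    <= dotv (projKo (yt + gam *: Gv)) Gv.
Proof.
move=> gam_gt0 /(projKo_normal (yt + gam *: Gv)); move: (projKo _) => P normal.
suff -> : dotv Y Gv + dotv (gam^-1 *: (yt - P)) (Y - P) =
          dotv P Gv + gam^-1 * dotv (yt + gam *: Gv - P) (Y - P).
  by rewrite gerDl mulr_ge0_le0 // invr_ge0 ltW.
have gam_neq0 : gam != 0 by rewrite gt_eqF.
by rewrite /dotv mulr_sumr -!big_split /=; apply: eq_bigr => j _; rewrite !mxE; field.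
Qed.

Section Lagrangian.
Variables (R : realType) (p q : nat).

Section SingleAgent.
Variables (d : nat) (f : 'cV[R]_d -> R) (A : 'M[R]_(p, d)) (b : 'cV[R]_p).
Variables (g : 'cV[R]_d -> 'cV[R]_q) (Om : set 'cV[R]_d) (x : 'cV[R]_d) (y : 'cV[R]_(p + q)).

Lemma ellE : Om x -> coneKo y -> ell f A b g Om x y = (f x + dotv y (Gfun A b g x))%:E.
Proof. by move=> Omx Koy; rewrite /ell /Defs.indic asboolT // asboolT //= adde0 sube0. Qed.

Lemma ell_notOm : ~ Om x -> coneKo y -> ell f A b g Om x y = +oo%E.
Proof. by move=> Omx Koy; rewrite /ell /Defs.indic asboolF // asboolT. Qed.

Lemma ell_notKo : Om x -> ~ coneKo y -> ell f A b g Om x y = -oo%E.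
Proof. by move=> Omx Koy; rewrite /ell /Defs.indic asboolT // asboolF. Qed.

End SingleAgent.

(* Otherwise the agent index of [f], [g] and [Om], which is inferable from the vector
   argument, would become implicit. *)
Local Unset Implicit Arguments.
Variables (m : nat) (n : 'I_m -> nat) (f : forall i, 'cV[R]_(n i) -> R).
Variables (A : forall i, 'M[R]_(p, n i)) (b : 'I_m -> 'cV[R]_p).
Variables (g : forall i, 'cV[R]_(n i) -> 'cV[R]_q) (Om : forall i, set 'cV[R]_(n i)).
Variables (x : forall i, 'cV[R]_(n i)) (Y : 'I_m -> 'cV[R]_(p + q)).
Local Set Implicit Arguments.
Hypotheses (Omx : forall i, Om i (x i)) (KoY : forall i, coneKo (Y i)).

Lemma LagE :
  Lag f A b g Om x Y = (\sum_i (f i (x i) + dotv (Y i) (Gfun (A i) (b i) (g i) (x i))))%:E.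
Proof. by rewrite /Lag -sumEFin; apply: eq_bigr => i _; apply: ellE. Qed.

Lemma Lag_subdiff_x (w : forall i, 'cV[R]_(n i)) :
  (forall i z, Om i z ->
     f i (x i) + dotv (Y i) (Gfun (A i) (b i) (g i) (x i)) + dotv (w i) (z - x i)
       <= f i z + dotv (Y i) (Gfun (A i) (b i) (g i) z)) ->
  subdiffS (fun x' => Lag f A b g Om x' Y) x w.
Proof.
move=> local_ineq; split; first by rewrite LagE.
move=> z; rewrite LagE /Lag /stk_dot /stk_sub -EFinD -big_split -sumEFin.
apply: lee_sum => i _; have [Omz|notOmz] := pselect (Om i (z i)).
  by rewrite ellE // lee_fin local_ineq.
by rewrite ell_notOm // leey.
Qed.

Lemma negLag_subdiff_Y (u : 'I_m -> 'cV[R]_(p + q)) :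
  (forall i Y', coneKo Y' ->
     dotv Y' (Gfun (A i) (b i) (g i) (x i)) + dotv (u i) (Y' - Y i)
       <= dotv (Y i) (Gfun (A i) (b i) (g i) (x i))) ->
  subdiffS (d := fun _ => (p + q)%N) (fun Y' => - Lag f A b g Om x Y')%E Y u.
Proof.
move=> local_ineq; split; first by rewrite LagE.
move=> Y'; rewrite LagE leeNr -EFinN /Lag /stk_dot /stk_sub opprD opprK -sumrB -sumEFin.
apply: lee_sum => i _; have [KoY'|notKoY'] := pselect (coneKo (Y' i)).
  by rewrite ellE // lee_fin lerBrDr -addrA lerD2l local_ineq.
by rewrite ell_notKo // leNye.
Qed.

End Lagrangian.

Section Kronecker.
Variables (R : realType) (m r s : nat) (U : 'M[R]_(r, m)).

Lemma UkrTE (W : 'I_r -> 'cV[R]_s) i a c : UkrT U W i a c = \sum_j U j i * W j a c.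
Proof. by rewrite /UkrT summxE; apply: eq_bigr => j _; rewrite mxE. Qed.

Lemma UkrE (Y : 'I_m -> 'cV[R]_s) j a c : Ukr U Y j a c = \sum_i U j i * Y i a c.
Proof. by rewrite /Ukr summxE; apply: eq_bigr => i _; rewrite mxE. Qed.

Lemma UkrTD (W W' : 'I_r -> 'cV[R]_s) :
  UkrT U (fun j => W j + W' j) = fun i => UkrT U W i + UkrT U W' i.
Proof.
by apply: funext => i; rewrite /UkrT -big_split; apply: eq_bigr => j _; rewrite scalerDr.
Qed.

Lemma UkrTB (W W' : 'I_r -> 'cV[R]_s) :
  UkrT U (fun j => W j - W' j) = fun i => UkrT U W i - UkrT U W' i.
Proof.
by apply: funext => i; rewrite /UkrT -sumrB; apply: eq_bigr => j _; rewrite scalerBr.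
Qed.

Lemma UkrTZ c (W : 'I_r -> 'cV[R]_s) :
  UkrT U (fun j => c *: W j) = fun i => c *: UkrT U W i.
Proof.
by apply: funext => i; rewrite /UkrT scaler_sumr; apply: eq_bigr => j _; rewrite !scalerA mulrC.
Qed.

Lemma UkrT_Ukr (Y : 'I_m -> 'cV[R]_s) :
  UkrT U (Ukr U Y) = fun i => \sum_j (U^T *m U) i j *: Y j.
Proof.
apply: funext => i; apply/matrixP => a c; rewrite UkrTE summxE.
under eq_bigr do rewrite UkrE mulr_sumr.
rewrite exchange_big; apply: eq_bigr => l _; rewrite !mxE mulr_suml.
by apply: eq_bigr => j _; rewrite mxE mulrA.
Qed.

Lemma UkrT_inj : \rank U = r -> injective (@UkrT R m r s U).
Proof.
move=> rkU W W' eqW; apply: funext => j; apply/matrixP => a c.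
pose w (V : 'I_r -> 'cV[R]_s) : 'rV[R]_r := \row_l V l a c.
have rowU : row_free U by rewrite /row_free rkU.
suff /(row_free_inj rowU)/matrixP/(_ 0 j) : w W *m U = w W' *m U by rewrite !mxE.
apply/matrixP => o i; rewrite !mxE.
under eq_bigr do rewrite mxE mulrC; under [RHS]eq_bigr do rewrite mxE mulrC.
by have := congr1 (fun V : 'I_m -> 'cV[R]_s => V i a c) eqW; rewrite /= !UkrTE.
Qed.

End Kronecker.

Section DPMMStep.
Variables (R : realType) (m : nat) (n : 'I_m -> nat) (p q r : nat) (U : 'M[R]_(r, m)).
Local Unset Implicit Arguments.
Variables (f : forall i, 'cV[R]_(n i) -> R) (A : forall i, 'M[R]_(p, n i)) (b : 'I_m -> 'cV[R]_p).
Variables (g : forall i, 'cV[R]_(n i) -> 'cV[R]_q) (Om : forall i, set 'cV[R]_(n i)).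
Local Set Implicit Arguments.
Variables (theta alpha gamma : 'I_m -> R) (beta : R).
Hypotheses (f_convex : forall i, convex_fun (f i))
  (g_convex : forall i j, convex_fun (fun z => g i z j 0))
  (Om_convex : forall i, convex_set (Om i)).
Hypotheses (alpha_gt0 : forall i, 0 < alpha i) (gamma_gt0 : forall i, 0 < gamma i)
  (beta_gt0 : 0 < beta).
Implicit Types (xk xh v : forall i, 'cV[R]_(n i)) (yk yh lamk : 'I_m -> 'cV[R]_(p + q)).
Implicit Types (Zk Zh : 'I_r -> 'cV[R]_(p + q)).

Lemma dpmm_inclusion xk yk lamk Zk xh v yh Zh :
  (forall i, subdiff (phik (f i) (A i) (b i) (g i) (Om i) (gamma i) (alpha i) (xk i)
                           (yk i - gamma i *: lamk i)) (xh i) (v i)) ->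
  (forall i, yh i =
     projKo (yk i - gamma i *: lamk i + gamma i *: Gfun (A i) (b i) (g i) (xh i))) ->
  lamk = UkrT U Zk -> Zh = (fun j => Zk j + beta *: Ukr U yh j) ->
  QPhi f A b g Om alpha gamma beta U (Pt xh yh Zh)
    (pt_add (Qop alpha gamma beta U (Pt xk yk Zk)) (Pt v (fun _ => 0) (fun _ => 0))).
Proof.
move=> sub_v yh_def lamk_def Zh_def.
have Omxh i : Om i (xh i) := subdiff_phik_dom (sub_v i).
have Koyh i : coneKo (yh i) by rewrite yh_def; apply: projKo_coneKo.
pose u i := (gamma i)^-1 *: (yk i - gamma i *: lamk i - yh i).
exists (Pt (fun i => v i + (alpha i)^-1 *: (xk i - xh i)) (fun i => u i + UkrT U Zh i)
           (fun j => - Ukr U yh j)).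
  split=> /=; [|split; last by []].
    apply: Lag_subdiff_x => // i z Omz; rewrite yh_def.
    exact: subdiff_phik_lagrangian.
  exists u => //; apply: negLag_subdiff_Y => // i Y' KoY'; rewrite /u yh_def.
  exact: projKo_supergradient.
rewrite /pt_add /Qop /=; congr Pt;
  [apply: functional_extensionality_dep | apply: funext..] => i; apply/matrixP => a c.
- by rewrite !mxE; field; rewrite gt_eqF.
- by rewrite /u lamk_def !mxE; field; rewrite gt_eqF.
- by rewrite Zh_def !mxE; field; rewrite gt_eqF.
Qed.

Lemma dpmm_update xk yk lamk Zk xh yh Zh x1 y1 lam1 Z1 :
  (forall i, x1 i = (1 - theta i) *: xk i + theta i *: xh i) ->
  (forall i, y1 i = yh i + gamma i *: (lamk i - lam1 i)) ->
  lamk = UkrT U Zk -> lam1 = UkrT U Zh -> Z1 = Zh ->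
  Pt x1 y1 Z1 = pt_sub (Pt xk yk Zk) (Mop theta gamma U (pt_sub (Pt xk yk Zk) (Pt xh yh Zh))).
Proof.
move=> x1_def y1_def lamk_def lam1_def ->; rewrite /pt_sub /Mop /= UkrTB -lamk_def -lam1_def.
congr Pt; [apply: functional_extensionality_dep | apply: funext..] => i;
  rewrite ?x1_def ?y1_def; apply/matrixP => a c; rewrite !mxE; ring.
Qed.

End DPMMStep.

Lemma pt_norm_x (R : realType) m (n : 'I_m -> nat) s r (v : forall i, 'cV[R]_(n i)) :
  pt_norm (@Pt R m n s r v (fun _ => 0) (fun _ => 0)) = Num.sqrt (\sum_i vnorm (v i) ^+ 2).
Proof.
have vnorm0_sqr : vnorm (0 : 'cV[R]_s) ^+ 2 = 0 by rewrite vnorm0 expr0n.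
by rewrite /pt_norm /= vnorm0_sqr !big1_eq !addr0.
Qed.

Theorem lemma2 (R : realType) (m : nat) (n : 'I_m -> nat) (p q r : nat)
  (f : forall i : 'I_m, 'cV[R]_(n i) -> R)
  (A : forall i : 'I_m, 'M[R]_(p, n i)) (b : 'I_m -> 'cV[R]_p)
  (g : forall i : 'I_m, 'cV[R]_(n i) -> 'cV[R]_q)
  (Om : forall i : 'I_m, set 'cV[R]_(n i))
  (E : rel 'I_m) (L : 'M[R]_m) (U : 'M[R]_(r, m))
  (theta alpha gamma : 'I_m -> R) (beta : R)
  (x : nat -> forall i : 'I_m, 'cV[R]_(n i))
  (y lam : nat -> 'I_m -> 'cV[R]_(p + q))
  (xh v : nat -> forall i : 'I_m, 'cV[R]_(n i))
  (yh : nat -> 'I_m -> 'cV[R]_(p + q))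
  (eps : nat -> 'I_m -> R)
  (Z Zh : nat -> 'I_r -> 'cV[R]_(p + q)) :
  (2 <= m)%N ->
  (forall i, (1 <= n i)%N) ->
  (* (A1) *)
  symmetric E ->
  (forall i j, connect E i j) ->
  L^T = L ->
  (forall i j, i != j -> ~~ E i j -> L i j = 0) ->
  (forall w : 'cV[R]_m, L *m w = 0 <-> exists c : R, w = c *: const_mx 1) ->
  L = U^T *m U ->
  \rank U = r ->
  U *m (const_mx 1 : 'cV[R]_m) = 0 ->
  (* (A2) *)
  (forall i, convex_fun (f i) /\ closed_fun (f i)) ->
  (forall i (j : 'I_q), convex_fun (fun z => g i z j 0) /\
                        closed_fun (fun z => g i z j 0)) ->
  (forall i, (exists z, Om i z) /\ closed (Om i) /\ convex_set (Om i)) ->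
  (exists xs : forall i : 'I_m, 'cV[R]_(n i),
     ((forall i, Om i (xs i)) /\ @coneK R p q (\sum_i Gfun (A i) (b i) (g i) (xs i))) /\
     forall xx : forall i : 'I_m, 'cV[R]_(n i),
       (forall i, Om i (xx i)) -> @coneK R p q (\sum_i Gfun (A i) (b i) (g i) (xx i)) ->
       \sum_i f i (xs i) <= \sum_i f i (xx i)) ->
  (* (A3) *)
  (exists xbar : forall i : 'I_m, 'cV[R]_(n i),
     (forall i, (Om i)° (xbar i)) /\
     \sum_i (A i *m xbar i - b i) = 0 /\
     forall j : 'I_q, (\sum_i g i (xbar i)) j 0 < 0) ->
  (* parameters *)
  (forall i, 0 < theta i) -> (forall i, 0 < alpha i) -> (forall i, 0 < gamma i) ->
  0 < beta ->
  (* initialization *)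
  (forall i, Om i (x 0%N i)) ->
  (forall i, @coneKo R p q (y 0%N i)) ->
  (forall i, lam 0%N i = 0) ->
  (* iterations of the inexact DPMM *)
  (forall k i, 0 <= eps k i) ->
  (forall k i,
     subdiff (phik (f i) (A i) (b i) (g i) (Om i) (gamma i) (alpha i) (x k i)
                   (y k i - gamma i *: lam k i)) (xh k i) (v k i) /\
     vnorm (v k i) <= eps k i) ->
  (forall k i, yh k i =
     @projKo R p q (y k i - gamma i *: lam k i + gamma i *: Gfun (A i) (b i) (g i) (xh k i))) ->
  (forall k i, x k.+1 i = (1 - theta i) *: x k i + theta i *: xh k i) ->
  (forall k i, lam k.+1 i = lam k i + beta *: \sum_j L i j *: yh k j) ->
  (forall k i, y k.+1 i = yh k i + gamma i *: (lam k i - lam k.+1 i)) ->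
  (* Z^k, Zh^k with Lambda^k = U^T Z^k and Lambdahat^k = Lambda^{k+1} = U^T Zh^k *)
  (forall k, lam k = UkrT U (Z k)) ->
  (forall k, lam k.+1 = UkrT U (Zh k)) ->
  forall k : nat,
    let xi := @Pt R m n (p + q) r (x k) (y k) (Z k) in
    let xi1 := @Pt R m n (p + q) r (x k.+1) (y k.+1) (Z k.+1) in
    let xih := @Pt R m n (p + q) r (xh k) (yh k) (Zh k) in
    let V := @Pt R m n (p + q) r (v k) (fun _ => 0) (fun _ => 0) in
    QPhi f A b g Om alpha gamma beta U xih (pt_add (Qop alpha gamma beta U xi) V) /\
    xi1 = pt_sub xi (Mop theta gamma U (pt_sub xi xih)) /\
    pt_norm V <= Num.sqrt (\sum_i eps k i ^+ 2).
Proof.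
move=> _ _ _ _ _ _ _ LUU rkU _ f_cvx g_cvx Om_cvx _ _ _ alpha_gt0 gamma_gt0 beta_gt0 _ _ _ _
  step yh_def x_upd lam_upd y_upd lam_Z lam1_Zh k xi xi1 xih V.
have Zh_def : Zh k = (fun j => Z k j + beta *: Ukr U (yh k) j).
  apply: (UkrT_inj rkU); rewrite UkrTD UkrTZ UkrT_Ukr -LUU -lam_Z -lam1_Zh.
  by apply: funext => i; rewrite lam_upd.
have Z1 : Z k.+1 = Zh k by apply: (UkrT_inj rkU); rewrite -lam_Z -lam1_Zh.
split; [|split].
- exact: (dpmm_inclusion (fun i => (f_cvx i).1) (fun i j => (g_cvx i j).1)
    (fun i => (Om_cvx i).2.2) alpha_gt0 gamma_gt0 beta_gt0 (fun i => (step k i).1)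
    (yh_def k) (lam_Z k) Zh_def).
- exact: dpmm_update (x_upd k) (y_upd k) (lam_Z k) (lam1_Zh k) Z1.
- rewrite pt_norm_x ler_sqrt ?sumr_ge0 // => [|i _]; last by rewrite sqr_ge0.
  apply: ler_sum => i _; have [_ v_le] := step k i.
  by rewrite !expr2 ler_pM ?vnorm_ge0.
Qed.
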